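(* As formal power series in $x$, $$\sum_{n\ge 0}\left\langle {n \atop 2}\right\rangle_{\!2}x^n=\frac{x^2-x^3-x^4-3x^5+5x^6}{(1-x)^3(1-2x)^2(1-5x+5x^2)}.$$
   Context: A $c$-rook placement on an $n\times n$ board is a placement of $cn$ rooks on the cells, several rooks being allowed in the same cell, such that every row and every column contains exactly $c$ rooks (equivalently, an $n\times n$ matrix of nonnegative integers with all row and column sums equal to $c$). A drop is a rook lying strictly below the main diagonal, i.e.\ in a cell $(i,j)$ (row $i$, column $j$) with $i>j$, counted with multiplicity. The generalized Eulerian number $\left\langle {n \atop k}\right\rangle_{\!c}$ is the number of $c$-rook placements on the $n\times n$ board with exactly $k$ drops; for $n=0$ (empty board, only zero drops possible) $\left\langle {0 \atop k}\right\rangle_{\!c}=0$ when $k\ge1$. *)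

From HB Require Import structures.
From mathcomp Require Import all_boot all_order all_algebra.
Set Implicit Arguments. Unset Strict Implicit. Unset Printing Implicit Defensive.
Import Order.TTheory GRing.Theory Num.Theory.

(* Every entry is then
   at most c, so we may take entries in 'I_c.+1 (a finite type) without loss. *)
Definition rook_placement (c n : nat) (A : 'M['I_c.+1]_n) : bool :=
  [forall i, (\sum_(j < n) (A i j : nat))%N == c] &&
  [forall j, (\sum_(i < n) (A i j : nat))%N == c].

Definition drops (c n : nat) (A : 'M['I_c.+1]_n) : nat :=
  (\sum_(i < n) \sum_(j < n | (j < i)%N) (A i j : nat))%N.

Definition gen_eulerian (n k c : nat) : nat :=
  #|[set A : 'M['I_c.+1]_n | rook_placement A && (drops A == k)]|.

Local Open Scope ring_scope.

Definition gf_num : {poly int} :=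
  'X^2 - 'X^3 - 'X^4 - 3%:P * 'X^5 + 5%:P * 'X^6.

Definition gf_den : {poly int} :=
  (1 - 'X) ^+ 3 * (1 - 2%:P * 'X) ^+ 2 * (1 - 5%:P * 'X + 5%:P * 'X^2).

From HB Require Import structures.
From mathcomp Require Import all_boot all_order all_algebra.
From mathcomp Require Import zify ring.
From Stdlib Require Import FunctionalExtensionality.
Set Implicit Arguments. Unset Strict Implicit. Unset Printing Implicit Defensive.
Import GRing.Theory.

(* Removing the first row and column of the board turns a
   2-rook placement into a placement on a smaller board whose rows and
   columns already hold some rooks.  Summed over all the ways the removed
   columns (resp. rows) can meet the smaller board, the number of
   completions depends only on the list of their sums there, the analogous
   list for the rows, and the number of drops still to be placed; such a
   triple is a [state].  Starting from ([::], [::], 2) only nine normalized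
   states occur, so the counts obey a linear recurrence with a 9 x 9
   transfer matrix.  This matrix is block triangular with eigenvalues 1, 2
   and the roots of x^2 - 5x + 5, and composing the annihilating
   polynomials of the shift operator along its blocks gives
   (x-1)^3 (x-2)^2 (x^2-5x+5), the reciprocal of the denominator; the first
   seven values give the numerator. *)

Section ShiftAction.
Local Open Scope ring_scope.
Variable R : comNzRingType.
Implicit Types (p q : {poly R}) (a b f g : nat -> R) (c : R).

Definition shift_act p a : nat -> R := fun n => \sum_(i < size p) p`_i * a (n + i)%N.

Lemma shift_actE p a N n : (size p <= N)%N ->
  shift_act p a n = \sum_(i < N) p`_i * a (n + i)%N.
Proof.
move=> leN; rewrite /shift_act (big_ord_widen _ (fun i => p`_i * a (n + i)%N) leN).
rewrite big_mkcond; apply: eq_bigr => i _.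
by case: ltnP => // /leq_sizeP ->; rewrite ?mul0r.
Qed.

Lemma eq_shift_act p a b : a =1 b -> shift_act p a =1 shift_act p b.
Proof. by move=> eq_ab n; apply: eq_bigr => i _; rewrite eq_ab. Qed.

Lemma shift_act0 a n : shift_act 0 a n = 0.
Proof. by rewrite /shift_act size_poly0 big_ord0. Qed.

Lemma shift_actD p q a n :
  shift_act (p + q) a n = shift_act p a n + shift_act q a n.
Proof.
pose N := maxn (size p) (size q).
rewrite !(@shift_actE _ _ N) ?leq_maxl ?leq_maxr ?(leq_trans (size_polyD _ _)) //.
by rewrite -big_split; apply: eq_bigr => i _; rewrite coefD mulrDl.
Qed.

Lemma shift_actDr p a b n :
  shift_act p (fun m => a m + b m) n = shift_act p a n + shift_act p b n.
Proof. by rewrite -big_split; apply: eq_bigr => i _; rewrite mulrDr. Qed.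

Lemma shift_actZr p c a n :
  shift_act p (fun m => c * a m) n = c * shift_act p a n.
Proof. by rewrite mulr_sumr; apply: eq_bigr => i _; rewrite mulrCA. Qed.

Lemma shift_actC c a n : shift_act c%:P a n = c * a n.
Proof.
by rewrite (@shift_actE _ _ 1) ?size_polyC ?leq_b1 // big_ord1 coefC addn0.
Qed.

Lemma shift_actCM c p a n : shift_act (c%:P * p) a n = c * shift_act p a n.
Proof.
rewrite -shift_actZr mul_polyC !(@shift_actE _ _ (size p)) ?size_scale_leq //.
by apply: eq_bigr => i _; rewrite coefZ -mulrA mulrCA.
Qed.

Lemma shift_actMX p a n : shift_act (p * 'X) a n = shift_act p a n.+1.
Proof.
rewrite (@shift_actE _ _ (size p).+1); last first.
  by rewrite (leq_trans (size_polyMleq _ _)) ?size_polyX ?addn2.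
by rewrite big_ord_recl coefMX /= mul0r add0r; apply: eq_bigr => i _; rewrite coefMX addnS.
Qed.

Lemma shift_actM p q a n :
  shift_act (p * q) a n = shift_act p (shift_act q a) n.
Proof.
elim/poly_ind: p n => [|p c IHp] n; first by rewrite mul0r !shift_act0.
by rewrite mulrDl mulrAC !shift_actD shift_actCM !shift_actMX IHp shift_actC.
Qed.

Lemma shift_actB p q a n :
  shift_act (p - q) a n = shift_act p a n - shift_act q a n.
Proof. by rewrite -mulN1r -polyCN shift_actD shift_actCM mulN1r. Qed.

Lemma shift_act_XsubC c a n : shift_act ('X - c%:P) a n = a n.+1 - c * a n.
Proof. by rewrite shift_actB -['X]mul1r shift_actMX -polyC1 !shift_actC mul1r. Qed.

Lemma shift_act_coupled p q a b f g :
    shift_act p a =1 (fun n => f n + b n) -> shift_act q b =1 (fun n => g n + a n) ->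
  shift_act (q * p - 1) a =1 (fun n => shift_act q f n + g n).
Proof.
move=> pa qb n; rewrite shift_actB shift_actM (eq_shift_act _ pa) shift_actDr qb.
by rewrite -polyC1 shift_actC mul1r addrA addrK.
Qed.

Definition annihilates p a := forall n, shift_act p a n = 0.

Lemma annihilates_mull p q a : annihilates p a -> annihilates (q * p) a.
Proof.
move=> ann_a n; rewrite shift_actM (eq_shift_act _ ann_a).
by rewrite /shift_act big1 // => i _; rewrite mulr0.
Qed.

Lemma annihilates_mulr p q a : annihilates p a -> annihilates (p * q) a.
Proof. by rewrite mulrC; apply: annihilates_mull. Qed.

Lemma annihilatesD p a b :
  annihilates p a -> annihilates p b -> annihilates p (fun n => a n + b n).
Proof. by move=> ann_a ann_b n; rewrite shift_actDr ann_a ann_b addr0. Qed.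

Lemma annihilatesZ p c a : annihilates p a -> annihilates p (fun n => c * a n).
Proof. by move=> ann_a n; rewrite shift_actZr ann_a mulr0. Qed.

Lemma annihilates_shift_act p q a :
  annihilates p a -> annihilates p (shift_act q a).
Proof.
by move=> ann_a n; rewrite -shift_actM mulrC; apply: annihilates_mull.
Qed.

Lemma annihilates_comp p q a b :
  shift_act q a =1 b -> annihilates p b -> annihilates (p * q) a.
Proof. by move=> qa_b ann_b n; rewrite shift_actM (eq_shift_act _ qa_b). Qed.

Lemma sum_coef_reciprocal p d a m : (size p <= d.+1)%N ->
  \sum_(i < (m + d).+1) p`_i * a (m + d - i)%N =
  shift_act (\poly_(j < d.+1) p`_(d - j)) a m.
Proof.
move=> le_p_d; rewrite (@shift_actE _ _ d.+1) ?size_poly //.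
transitivity (\sum_(i < d.+1) p`_i * a (m + d - i)%N).
  rewrite (big_ord_widen _ (fun i => p`_i * a (m + d - i)%N) (_ : d.+1 <= (m + d).+1)%N);
    last by rewrite ltnS leq_addl.
  rewrite [RHS]big_mkcond; apply: eq_bigr => i _; case: (ltnP i d.+1) => // le_d_i.
  by have /leq_sizeP-> // := leq_trans le_p_d le_d_i; rewrite mul0r.
rewrite [LHS](reindex_inj rev_ord_inj) /=; apply: eq_bigr => j _.
by rewrite coef_poly ltn_ord subSS -addnBA ?leq_subr // subKn // -ltnS.
Qed.

End ShiftAction.

Lemma sum_row_mx (T : finType) m n1 n2 (F : 'M[T]_(m, n1 + n2) -> nat) :
  \sum_A F A = \sum_(L : 'M_(m, n1)) \sum_(R : 'M_(m, n2)) F (row_mx L R).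
Proof.
rewrite pair_big (reindex (fun LR : 'M_(m, n1) * 'M_(m, n2) => row_mx LR.1 LR.2)) //.
exists (fun A => (lsubmx A, rsubmx A)) => [[L R] _|A _] /=; last exact: hsubmxK.
by rewrite row_mxKl row_mxKr.
Qed.

Lemma sum_col_mx (T : finType) m1 m2 n (F : 'M[T]_(m1 + m2, n) -> nat) :
  \sum_A F A = \sum_(U : 'M_(m1, n)) \sum_(D : 'M_(m2, n)) F (col_mx U D).
Proof.
rewrite pair_big (reindex (fun UD : 'M_(m1, n) * 'M_(m2, n) => col_mx UD.1 UD.2)) //.
exists (fun A => (usubmx A, dsubmx A)) => [[U D] _|A _] /=; last exact: vsubmxK.
by rewrite col_mxKu col_mxKd.
Qed.

Lemma sum_mx11 (T : finType) (F : 'M[T]_1 -> nat) :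
  \sum_(u : 'M[T]_1) F u = \sum_(x : T) F (const_mx x).
Proof.
rewrite (reindex (fun x : T => const_mx x)) //.
exists (fun u : 'M_1 => u ord0 ord0) => [x _|u _]; first by rewrite mxE.
by apply/matrixP => i k; rewrite mxE !ord1.
Qed.

Lemma sum_trmx (T : finType) j (F : 'cV[T]_j -> nat) :
  \sum_(c : 'cV[T]_j) F c = \sum_(w : 'rV[T]_j) F (trmx w).
Proof.
rewrite (reindex (fun w : 'rV[T]_j => trmx w)) //.
by exists (fun c : 'cV_j => trmx c) => w _; rewrite trmxK.
Qed.

Lemma sum_rV_cons (T : finType) j (F : 'rV[T]_(1 + j) -> nat) :
  \sum_(v : 'rV[T]_(1 + j)) F v =
  \sum_(x : T) \sum_(w : 'rV[T]_j) F (row_mx (const_mx x) w).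
Proof.
rewrite pair_big (reindex (fun xw : T * 'rV[T]_j => row_mx (const_mx xw.1) xw.2)) //.
exists (fun v => (lsubmx v ord0 ord0, rsubmx v)) => [[x w] _|v _] /=.
  by rewrite row_mxKl row_mxKr mxE.
rewrite -[RHS]hsubmxK; congr (row_mx _ _).
by apply/matrixP => i k; rewrite !ord1 mxE.
Qed.

Lemma forall_lrshift j (P : 'I_(1 + j) -> bool) :
  [forall i, P i] = P (lshift j ord0) && [forall i : 'I_j, P (rshift 1 i)].
Proof.
apply/forallP/andP => [P_all|[P0 /forallP PS] i]; first by split => //; apply/forallP.
case: (splitP i) => [i0 Ei|i' Ei]; last by have -> : i = rshift 1 i' by apply/val_inj.
by have -> : i = lshift j ord0 by apply/val_inj; rewrite /= Ei (ord1 i0).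
Qed.

Lemma sum_lrshift j (F : 'I_(1 + j) -> nat) :
  \sum_(i < 1 + j) F i = F (lshift j ord0) + \sum_(i < j) F (rshift 1 i).
Proof. by rewrite big_split_ord big_ord1. Qed.

Lemma forall_ord0 (P : pred 'I_0) : [forall i, P i].
Proof. by apply/forallP => -[]. Qed.

Lemma sum_pick_uniq (T : eqType) (s : seq T) x (f : T -> nat) :
  uniq s -> x \in s -> \sum_(u <- s) (x == u) * f u = f x.
Proof.
elim: s => [|y s IHs] //= /andP[y_s uniq_s]; rewrite in_cons big_cons.
case: eqP => [->|_] /= x_s; last by rewrite mul0n add0n IHs.
rewrite mul1n big1_seq ?addn0 // => u /= u_s; case: eqP => // y_u.
by move: y_s; rewrite y_u u_s.
Qed.

(* Boards are 'I_3-valued matrices, and rho/sig are the rooks that rows and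
   columns already hold from outside the board. *)
Definition fill_count j (rho sig : 'I_j -> nat) e : nat :=
  \sum_(A : 'M['I_3]_j)
    [&& [forall i, \sum_(k < j) (A i k : nat) + rho i == 2],
        [forall k, \sum_(i < j) (A i k : nat) + sig k == 2] &
        drops A == e].

Section Corner.
Variables (j : nat) (a : 'M['I_3]_1) (r : 'rV['I_3]_j) (c : 'cV['I_3]_j) (B : 'M['I_3]_j).
Let A : 'M['I_3]_(1 + j) := col_mx (row_mx a r) (row_mx c B).

Lemma corner_rows (rho : 'I_(1 + j) -> nat) :
  [forall i, \sum_(k < 1 + j) (A i k : nat) + rho i == 2] =
  (a ord0 ord0 + \sum_(k < j) (r ord0 k : nat) + rho (lshift j ord0) == 2) &&
  [forall i, \sum_(k < j) (B i k : nat) + (rho (rshift 1 i) + c i ord0) == 2].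
Proof.
rewrite forall_lrshift sum_lrshift /A !col_mxEu row_mxEl.
congr ((_ + _ + _ == 2) && _); first by apply: eq_bigr => k _; rewrite col_mxEu row_mxEr.
apply: eq_forallb => i; rewrite sum_lrshift !col_mxEd row_mxEl addnAC addnC [c i ord0 + _]addnC.
by congr (_ + _ == 2); apply: eq_bigr => k _; rewrite col_mxEd row_mxEr.
Qed.

Lemma corner_cols (sig : 'I_(1 + j) -> nat) :
  [forall k, \sum_(i < 1 + j) (A i k : nat) + sig k == 2] =
  (a ord0 ord0 + \sum_(i < j) (c i ord0 : nat) + sig (lshift j ord0) == 2) &&
  [forall k, \sum_(i < j) (B i k : nat) + (sig (rshift 1 k) + r ord0 k) == 2].
Proof.
rewrite (forall_lrshift (fun k => \sum_(i < 1 + j) (A i k : nat) + sig k == 2)).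
rewrite sum_lrshift /A !col_mxEu row_mxEl.
congr ((_ + _ + _ == 2) && _); first by apply: eq_bigr => i _; rewrite col_mxEd row_mxEl.
apply: eq_forallb => k; rewrite sum_lrshift !col_mxEu row_mxEr addnAC addnC [r ord0 k + _]addnC.
by congr (_ + _ == 2); apply: eq_bigr => i _; rewrite col_mxEd row_mxEr.
Qed.

Lemma corner_drops : drops A = \sum_(i < j) (c i ord0 : nat) + drops B.
Proof.
rewrite /drops big_split_ord big_ord1 /= big_pred0 ?add0n // -big_split /=.
apply: eq_bigr => i _; rewrite big_split_ord /= big_mkcond big_ord1 /= /A col_mxEd row_mxEl.
by congr (_ + _); apply: eq_big => [k|k _]; rewrite /= ?ltnS ?ltn_add2l // col_mxEd row_mxEr.
Qed.

End Corner.

Lemma fill_count_corner j (rho sig : 'I_(1 + j) -> nat) e :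
  fill_count rho sig e =
  \sum_(a : 'M['I_3]_1) \sum_(r : 'rV['I_3]_j) \sum_(c : 'cV['I_3]_j)
    [&& a ord0 ord0 + \sum_k (r ord0 k : nat) + rho (lshift j ord0) == 2,
        a ord0 ord0 + \sum_i (c i ord0 : nat) + sig (lshift j ord0) == 2 &
        \sum_i (c i ord0 : nat) <= e] *
    fill_count (fun i => rho (rshift 1 i) + c i ord0)
               (fun k => sig (rshift 1 k) + r ord0 k) (e - \sum_i (c i ord0 : nat)).
Proof.
rewrite /fill_count sum_col_mx sum_row_mx.
apply: eq_bigr => a _; apply: eq_bigr => r _; rewrite sum_row_mx; apply: eq_bigr => c _.
rewrite big_distrr /=; apply: eq_bigr => B _.
rewrite corner_rows corner_cols corner_drops.
set s := \sum_(i < j) (c i ord0 : nat).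
have -> : (s + drops B == e) = (s <= e) && (drops B == e - s).
  by apply/eqP/andP => [<-|[le_s_e /eqP ->]]; [rewrite leq_addr addKn | rewrite subnKC].
by case: (_ == 2); case: (_ == 2); case: (s <= e); case: [forall i, _]; case: [forall k, _];
  case: (drops B == _).
Qed.

Lemma fill_count_ord0 (rho sig : 'I_0 -> nat) e : fill_count rho sig e = (e == 0).
Proof.
rewrite /fill_count (big_pred1 (const_mx ord0)); last first.
  by move=> A; symmetry; apply/eqP/matrixP => i [].
by rewrite !forall_ord0 /drops big_ord0 eq_sym.
Qed.

Definition total j (t : 'I_j -> nat) := \sum_(i < j) t i.

Lemma fill_count_balanced j (rho sig : 'I_j -> nat) e :
  fill_count rho sig e = (total rho == total sig) * fill_count rho sig e.
Proof.
case: eqP => [_|rho_sig]; first by rewrite mul1n.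
rewrite mul0n; apply: big1 => A _; case: and3P => // -[/forallP rows /forallP cols _].
have rows_sum : \sum_(i < j) (\sum_(k < j) (A i k : nat) + rho i) = \sum_(i < j) 2.
  by apply: eq_bigr => i _; apply/eqP.
have cols_sum : \sum_(k < j) (\sum_(i < j) (A i k : nat) + sig k) = \sum_(k < j) 2.
  by apply: eq_bigr => k _; apply/eqP.
rewrite !big_split /= sum_nat_const card_ord in rows_sum cols_sum.
rewrite exchange_big /= -rows_sum in cols_sum.
case: rho_sig; apply/eqP.
by rewrite -(eqn_add2l (\sum_(i < j) \sum_(k < j) (A i k : nat))) cols_sum.
Qed.

Definition rsum j (v : 'rV['I_3]_j) : nat := \sum_(i < j) (v ord0 i : nat).

Lemma rsum_eq0 j (v : 'rV['I_3]_j) : (rsum v == 0) = (v == const_mx ord0).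
Proof.
rewrite /rsum sum_nat_eq0; apply/forallP/eqP => [v0 | -> i]; last by rewrite mxE.
apply/matrixP => i k; rewrite (ord1 i) mxE; apply/val_inj => /=.
by apply/eqP; have := v0 k; rewrite implyTb.
Qed.

Lemma rsum_row_mx j x (w : 'rV['I_3]_j) :
  rsum (row_mx (const_mx x) w : 'rV_(1 + j)) = x + rsum w.
Proof.
by rewrite /rsum sum_lrshift row_mxEl mxE; congr (_ + _); apply: eq_bigr => i _; rewrite row_mxEr.
Qed.

(* A profile with parts ks = [:: k_1; ...; k_m] is a sum v_1 + ... + v_m of
   0..2-valued vectors with rsum v_i = k_i; profile_sum ks F adds up F over
   all of them, counted with multiplicity. *)
Fixpoint profile_sum j (ks : seq nat) (F : ('I_j -> nat) -> nat) : nat :=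
  if ks is k :: ks' then
    \sum_(v : 'rV['I_3]_j) (rsum v == k) * profile_sum ks' (fun t => F (fun i => v ord0 i + t i))
  else F (fun _ => 0).

Lemma profile_sumMl j ks b (F : ('I_j -> nat) -> nat) :
  profile_sum ks (fun t => b * F t) = b * profile_sum ks F.
Proof.
elim: ks F => [|k ks IHks] F //=.
by rewrite big_distrr; apply: eq_bigr => v _; rewrite IHks mulnCA.
Qed.

Lemma profile_sum0 j ks : profile_sum ks (fun _ : 'I_j -> nat => 0) = 0.
Proof. by have := profile_sumMl ks 0 (fun _ => 0); rewrite mul0n. Qed.

Lemma profile_sumD j ks (F G : ('I_j -> nat) -> nat) :
  profile_sum ks (fun t => F t + G t) = profile_sum ks F + profile_sum ks G.
Proof.
elim: ks F G => [|k ks IHks] F G //=.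
by rewrite -big_split; apply: eq_bigr => v _; rewrite IHks mulnDr.
Qed.

Lemma profile_sum_sum j (T : Type) (s : seq T) ks (F : T -> ('I_j -> nat) -> nat) :
  profile_sum ks (fun t => \sum_(x <- s) F x t) = \sum_(x <- s) profile_sum ks (F x).
Proof.
elim: s => [|x s IHs].
  rewrite big_nil -[RHS](profile_sum0 j ks); congr (profile_sum ks _).
  by apply: functional_extensionality => t; rewrite big_nil.
rewrite big_cons -IHs -profile_sumD; congr (profile_sum ks _).
by apply: functional_extensionality => t; rewrite big_cons.
Qed.

Lemma profile_sum_cons0 j ks (F : ('I_j -> nat) -> nat) :
  profile_sum (0 :: ks) F = profile_sum ks F.
Proof.
rewrite /= (bigD1 (const_mx ord0)) //= big1 ?addn0 => [|v /negbTE v_neq0]; last first.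
  by rewrite rsum_eq0 v_neq0.
rewrite rsum_eq0 eqxx mul1n; congr (profile_sum ks _); apply: functional_extensionality => t.
by congr (F _); apply: functional_extensionality => i; rewrite mxE.
Qed.

Lemma profile_sum_filter0 j ks (F : ('I_j -> nat) -> nat) :
  profile_sum ks F = profile_sum [seq k <- ks | k != 0] F.
Proof.
elim: ks F => [|k ks IHks] F //=.
case: eqP => [->|_]; first by rewrite -/(profile_sum (0 :: ks) F) profile_sum_cons0 IHks.
by apply: eq_bigr => v _; rewrite IHks.
Qed.

Lemma profile_sum_total j ks (F : ('I_j -> nat) -> nat) :
  profile_sum ks F = profile_sum ks (fun t => (total t == sumn ks) * F t).
Proof.
elim: ks F => [|k ks IHks] F /=; first by rewrite /total big1 // mul1n.
apply: eq_bigr => v _; rewrite IHks [in RHS]IHks; case: eqP => [rsum_v|]; last by rewrite !mul0n.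
congr (_ * _); congr (profile_sum ks _); apply: functional_extensionality => t.
case: eqP => [total_t|]; last by rewrite !mul0n.
by rewrite /total big_split /= -/(rsum v) -/(total t) rsum_v total_t eqxx !mul1n.
Qed.

Lemma profile_sum_ord0 ks (F : ('I_0 -> nat) -> nat) :
  profile_sum ks F = all (fun k => k == 0) ks * F (fun _ => 0).
Proof.
elim: ks F => [|k ks IHks] F /=; first by rewrite mul1n.
rewrite (big_pred1 (const_mx ord0)) => [|v]; last by symmetry; apply/eqP/matrixP => i [].
rewrite IHks /rsum big_ord0 mulnA; congr (_ * F _); last by apply: functional_extensionality => -[].
by rewrite eq_sym; case: (k == 0); case: (all _ _).
Qed.

Definition ocons j (x : nat) (t : 'I_j -> nat) : 'I_(1 + j) -> nat :=
  fun i => if split i is inr i' then t i' else x.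

Lemma ocons_lshift j x (t : 'I_j -> nat) : ocons x t (lshift j ord0) = x.
Proof. by rewrite /ocons (unsplitK (inl _ : 'I_1 + 'I_j)). Qed.

Lemma ocons_rshift j x (t : 'I_j -> nat) i : ocons x t (rshift 1 i) = t i.
Proof. by rewrite /ocons (unsplitK (inr _ : 'I_1 + 'I_j)). Qed.

(* The possible first entries of the vectors of a profile, summed, each
   paired with the parts left for the other entries. *)
Fixpoint first_splits (ks : seq nat) : seq (nat * seq nat) :=
  if ks is k :: ks' then
    flatten [seq [seq (x + p.1, (k - x) :: p.2) | p <- first_splits ks']
            | x <- [seq x <- iota 0 3 | x <= k]]
  else [:: (0, [::])].

Definition split_sum (ks : seq nat) (H : nat -> seq nat -> nat) : nat :=
  \sum_(p <- first_splits ks) H p.1 p.2.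

Lemma split_sum_cons k ks H :
  split_sum (k :: ks) H =
  \sum_(x < 3 | x <= k) split_sum ks (fun y l => H (x + y) ((k - x) :: l)).
Proof.
rewrite /split_sum.
have -> : first_splits (k :: ks) =
    flatten [seq [seq (x + p.1, (k - x) :: p.2) | p <- first_splits ks]
            | x <- [seq x <- iota 0 3 | x <= k]] by [].
rewrite big_flatten big_map big_filter.
rewrite -[iota 0 3]/(index_iota 0 3) big_mkord.
by apply: eq_bigr => x _; rewrite big_map.
Qed.

Lemma split_sum_sum (I : finType) ks (F : I -> nat -> seq nat -> nat) :
  split_sum ks (fun y l => \sum_(x : I) F x y l) = \sum_(x : I) split_sum ks (F x).
Proof. by rewrite /split_sum exchange_big. Qed.

Lemma split_sumMl ks b H : split_sum ks (fun y l => b * H y l) = b * split_sum ks H.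
Proof. by rewrite /split_sum big_distrr. Qed.

Lemma ocons_row_mx j x (w : 'rV['I_3]_j) y (t : 'I_j -> nat) :
  (fun i => (row_mx (const_mx x) w : 'rV_(1 + j)) ord0 i + ocons y t i) =
  ocons (x + y) (fun i => w ord0 i + t i).
Proof.
apply: functional_extensionality => i; case: (splitP i) => [i0 Ei|i' Ei].
  have -> : i = lshift j i0 by apply/val_inj.
  by rewrite (ord1 i0) row_mxEl mxE !ocons_lshift.
have -> : i = rshift 1 i' by apply/val_inj.
by rewrite row_mxEr !ocons_rshift.
Qed.

Lemma profile_sum_ocons j ks (F : ('I_(1 + j) -> nat) -> nat) :
  profile_sum ks F =
  split_sum ks (fun x l => profile_sum l (fun t : 'I_j -> nat => F (ocons x t))).
Proof.
elim: ks F => [|k ks IHks] F.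
  rewrite /split_sum /= big_seq1 /=; congr (F _).
  by apply: functional_extensionality => i; rewrite /ocons; case: split.
rewrite /= split_sum_cons sum_rV_cons (bigID (fun x : 'I_3 => x <= k)) /=.
rewrite [X in _ + X]big1 ?addn0 => [|x k_lt_x]; last first.
  apply: big1 => w _; rewrite rsum_row_mx; case: eqP => // k_eq.
  by rewrite -k_eq leq_addr in k_lt_x.
apply: eq_bigr => x le_x_k.
rewrite (split_sum_sum ks (fun (v : 'rV['I_3]_j) y l => (rsum v == k - x) *
  profile_sum l (fun t : 'I_j -> nat => F (ocons (x + y) (fun i : 'I_j => v ord0 i + t i))))).
apply: eq_bigr => w _; rewrite split_sumMl rsum_row_mx.
have -> : (x + rsum w == k) = (rsum w == k - x) by apply/eqP/eqP; lia.
congr (_ * _); rewrite IHks; congr (split_sum ks _).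
apply: functional_extensionality => y; apply: functional_extensionality => l.
by congr (profile_sum l _); apply: functional_extensionality => t; rewrite ocons_row_mx.
Qed.

Definition count_profiles j (kr ks : seq nat) e : nat :=
  profile_sum kr (fun rho : 'I_j -> nat => profile_sum ks (fun sig => fill_count rho sig e)).

Lemma count_profiles_unbalanced j kr ks e :
  sumn kr != sumn ks -> count_profiles j kr ks e = 0.
Proof.
move=> /negbTE kr_ks; rewrite /count_profiles profile_sum_total -[RHS](profile_sum0 j kr).
congr (profile_sum kr _); apply: functional_extensionality => rho.
case: eqP => [rho_kr|]; last by rewrite mul0n.
rewrite profile_sum_total mul1n -[RHS](profile_sum0 j ks).
congr (profile_sum ks _); apply: functional_extensionality => sig.
case: eqP => [sig_ks|]; last by rewrite mul0n.
by rewrite fill_count_balanced rho_kr sig_ks kr_ks mul0n muln0.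
Qed.

Lemma count_profiles_ord0 kr ks e :
  count_profiles 0 kr ks e = [&& all (fun k => k == 0) kr, all (fun k => k == 0) ks & e == 0].
Proof.
rewrite /count_profiles !profile_sum_ord0 fill_count_ord0.
by case: (all _ kr); case: (all _ ks); case: (e == 0).
Qed.

Lemma indicator_split (a x y e n m : nat) :
  [&& a + n + x == 2, a + m + y == 2 & m <= e] =
  \sum_(r < 3) \sum_(c < 3) [&& a + r + x == 2, a + c + y == 2 & c <= e] * (n == r) * (m == c)
  :> nat.
Proof.
rewrite !big_ord_recr !big_ord0 /=.
case: n => [|[|[|n]]]; case: m => [|[|[|m]]]; rewrite /= ?muln0 ?muln1 ?add0n ?addn0 //;
  try (have -> : (a + n.+3 + x == 2) = false by lia);
  try (have -> : (a + m.+3 + y == 2) = false by lia);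
  by rewrite ?andbF ?andFb.
Qed.

Lemma fill_count_ocons j x y (t' t : 'I_j -> nat) e :
  fill_count (ocons x t') (ocons y t) e =
  \sum_(a < 3) \sum_(r : 'rV['I_3]_j) \sum_(w : 'rV['I_3]_j)
     [&& a + rsum r + x == 2, a + rsum w + y == 2 & rsum w <= e] *
     fill_count (fun i => w ord0 i + t' i) (fun k => r ord0 k + t k) (e - rsum w).
Proof.
rewrite fill_count_corner sum_mx11; apply: eq_bigr => a _; apply: eq_bigr => r _.
rewrite sum_trmx; apply: eq_bigr => w _.
have -> : \sum_(i < j) (trmx w i ord0 : nat) = rsum w by apply: eq_bigr => i _; rewrite mxE.
rewrite !ocons_lshift mxE -/(rsum r); congr (_ * fill_count _ _ _).
  by apply: functional_extensionality => i; rewrite ocons_rshift mxE addnC.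
by apply: functional_extensionality => i; rewrite ocons_rshift addnC.
Qed.

Section CountStep.
Variables (j x y : nat) (l' l : seq nat) (e : nat).

Let rest_count (r w : 'rV['I_3]_j) e' :=
  profile_sum l' (fun t' : 'I_j -> nat => profile_sum l (fun t =>
    fill_count (fun i => w ord0 i + t' i) (fun k => r ord0 k + t k) e')).

Let corner_ok (a r c : nat) := [&& a + r + x == 2, a + c + y == 2 & c <= e].

Lemma count_profiles_cons c r e' :
  count_profiles j (c :: l') (r :: l) e' =
  \sum_(w : 'rV['I_3]_j) (rsum w == c) *
    \sum_(rv : 'rV['I_3]_j) (rsum rv == r) * rest_count rv w e'.
Proof.
rewrite /count_profiles /=; apply: eq_bigr => w _; congr (_ * _).
by rewrite profile_sum_sum; apply: eq_bigr => rv _; rewrite profile_sumMl.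
Qed.

Lemma profile_sum_fill_ocons :
  profile_sum l' (fun t' : 'I_j -> nat =>
    profile_sum l (fun t => fill_count (ocons x t') (ocons y t) e)) =
  \sum_(a < 3) \sum_(rv : 'rV['I_3]_j) \sum_(w : 'rV['I_3]_j)
    corner_ok a (rsum rv) (rsum w) * rest_count rv w (e - rsum w).
Proof.
have sum3E ks (G : 'rV['I_3]_j -> 'rV['I_3]_j -> ('I_j -> nat) -> nat) :
    profile_sum ks (fun t => \sum_(a < 3) \sum_(rv : 'rV['I_3]_j) \sum_(w : 'rV['I_3]_j)
      corner_ok a (rsum rv) (rsum w) * G rv w t) =
    \sum_(a < 3) \sum_(rv : 'rV['I_3]_j) \sum_(w : 'rV['I_3]_j)
      corner_ok a (rsum rv) (rsum w) * profile_sum ks (G rv w).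
  rewrite profile_sum_sum; apply: eq_bigr => a _; rewrite profile_sum_sum; apply: eq_bigr => rv _.
  by rewrite profile_sum_sum; apply: eq_bigr => w _; rewrite profile_sumMl.
rewrite -sum3E; congr (profile_sum l' _); apply: functional_extensionality => t'.
rewrite -sum3E; congr (profile_sum l _); apply: functional_extensionality => t.
exact: fill_count_ocons.
Qed.

Lemma count_profiles_step :
  profile_sum l' (fun t' : 'I_j -> nat =>
    profile_sum l (fun t => fill_count (ocons x t') (ocons y t) e)) =
  \sum_(a < 3) \sum_(r < 3) \sum_(c < 3 | corner_ok a r c)
    count_profiles j ((c : nat) :: l') ((r : nat) :: l) (e - c).
Proof.
rewrite profile_sum_fill_ocons; apply: eq_bigr => a _.
transitivity (\sum_(rv : 'rV['I_3]_j) \sum_(w : 'rV['I_3]_j) \sum_(r < 3) \sum_(c < 3)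
   corner_ok a r c * (rsum rv == r) * (rsum w == c) * rest_count rv w (e - rsum w)).
  apply: eq_bigr => rv _; apply: eq_bigr => w _.
  by rewrite /corner_ok indicator_split big_distrl; apply: eq_bigr => r _; rewrite big_distrl.
transitivity (\sum_(r < 3) \sum_(c < 3) \sum_(w : 'rV['I_3]_j) \sum_(rv : 'rV['I_3]_j)
   corner_ok a r c * (rsum rv == r) * (rsum w == c) * rest_count rv w (e - rsum w)).
  under [RHS]eq_bigr => r _ do rewrite exchange_big.
  under [RHS]eq_bigr => r _ do under eq_bigr => w _ do rewrite exchange_big.
  rewrite [RHS]exchange_big; under [RHS]eq_bigr => w _ do rewrite exchange_big.
  by rewrite [RHS]exchange_big.
apply: eq_bigr => r _; rewrite [RHS]big_mkcond; apply: eq_bigr => c _.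
rewrite count_profiles_cons; case: ifP => [_|_]; last first.
  by apply: big1 => w _; apply: big1 => rv _; rewrite !mul0n.
apply: eq_bigr => w _; case: eqP => [->|_] /=.
  by rewrite mul1n; apply: eq_bigr => rv _; rewrite mul1n muln1.
by rewrite mul0n; apply: big1 => rv _; rewrite muln0 mul0n.
Qed.

End CountStep.

(* Peeling the corner: a is the corner entry, r and c are the sums of the
   rest of the first row and column, which become new parts, and p.1, q.1
   are the rooks that the old parts put into the first row and column. *)
Definition transitions (kr ks : seq nat) (e : nat) : seq (seq nat * seq nat * nat) :=
  flatten [seq flatten [seq flatten [seq flatten [seq
     [seq (c :: p.2, r :: q.2, e - c)
     | c <- [seq c <- iota 0 3 | [&& a + r + p.1 == 2, a + c + q.1 == 2 & c <= e]]]
   | r <- iota 0 3] | a <- iota 0 3] | q <- first_splits ks] | p <- first_splits kr].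

Lemma sum_transitions kr ks e (f : seq nat * seq nat * nat -> nat) :
  \sum_(t <- transitions kr ks e) f t =
  \sum_(p <- first_splits kr) \sum_(q <- first_splits ks) \sum_(a < 3) \sum_(r < 3)
     \sum_(c < 3 | [&& a + r + p.1 == 2, a + c + q.1 == 2 & c <= e])
       f ((c : nat) :: p.2, (r : nat) :: q.2, e - c).
Proof.
have iota3E (F : nat -> nat) : \sum_(x <- iota 0 3) F x = \sum_(x < 3) F x.
  by rewrite -[iota 0 3]/(index_iota 0 3) big_mkord.
rewrite /transitions big_flatten big_map; apply: eq_bigr => p _.
rewrite big_flatten big_map; apply: eq_bigr => q _.
rewrite big_flatten big_map iota3E; apply: eq_bigr => a _.
rewrite big_flatten big_map iota3E; apply: eq_bigr => r _.
by rewrite big_map big_filter -[iota 0 3]/(index_iota 0 3) big_mkord.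
Qed.

Lemma count_profiles_succ j kr ks e :
  count_profiles (1 + j) kr ks e =
  \sum_(t <- transitions kr ks e) count_profiles j t.1.1 t.1.2 t.2.
Proof.
rewrite sum_transitions /count_profiles.
transitivity (profile_sum kr (fun rho : 'I_(1 + j) -> nat =>
   split_sum ks (fun y l => profile_sum l (fun t : 'I_j -> nat => fill_count rho (ocons y t) e)))).
  by congr (profile_sum kr _); apply: functional_extensionality => rho; rewrite profile_sum_ocons.
rewrite profile_sum_ocons /split_sum; apply: eq_bigr => p _.
by rewrite profile_sum_sum; apply: eq_bigr => q _; rewrite count_profiles_step.
Qed.

(* (kr, ks, e): parts of the row and column profiles, and drops left. *)
Definition state := (seq nat * seq nat * nat)%type.

Definition state_count j (s : state) := count_profiles j s.1.1 s.1.2 s.2.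

Definition balanced (s : state) := sumn s.1.1 == sumn s.1.2.

Definition normalize (s : state) : state :=
  ([seq k <- s.1.1 | k != 0], [seq k <- s.1.2 | k != 0], s.2).

Lemma state_count_normalize j s : state_count j s = balanced s * state_count j (normalize s).
Proof.
rewrite /state_count /balanced /normalize /=; case: eqP => [_|/eqP kr_ks]; last first.
  by rewrite mul0n count_profiles_unbalanced.
rewrite mul1n /count_profiles profile_sum_filter0; congr (profile_sum _ _).
by apply: functional_extensionality => rho; rewrite profile_sum_filter0.
Qed.

Lemma state_count_succ j s (L : seq state) : uniq L ->
    all (fun t => balanced t ==> (normalize t \in L)) (transitions s.1.1 s.1.2 s.2) ->
  state_count (1 + j) s =
  \sum_(u <- L) count (fun t => balanced t && (normalize t == u)) (transitions s.1.1 s.1.2 s.2) *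
                state_count j u.
Proof.
move=> uniq_L /allP closed_L; rewrite /state_count count_profiles_succ.
transitivity (\sum_(t <- transitions s.1.1 s.1.2 s.2) \sum_(u <- L)
                 (balanced t && (normalize t == u)) * state_count j u).
  rewrite big_seq [RHS]big_seq; apply: eq_bigr => t t_in.
  rewrite -/(state_count j t) state_count_normalize; case: (boolP (balanced t)) => bal_t /=.
    by rewrite mul1n sum_pick_uniq //; move: (closed_L t t_in); rewrite bal_t.
  by rewrite mul0n big1.
rewrite exchange_big; apply: eq_bigr => u _.
elim: (transitions _ _ _) => [|t ts IHts]; first by rewrite !big_nil.
by rewrite !big_cons IHts /= mulnDl; case: (_ && _).
Qed.

Definition states : seq state :=
  [:: ([::], [::], 0); ([::], [::], 1); ([::], [::], 2); ([:: 1], [:: 1], 0);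
      ([:: 1], [:: 1], 1); ([:: 2], [:: 2], 0); ([:: 2], [:: 1; 1], 0);
      ([:: 1; 1], [:: 2], 0); ([:: 1; 1], [:: 1; 1], 0)].

Definition transfer (k l : nat) : nat :=
  let s := nth ([::], [::], 0) states k in
  count (fun t => balanced t && (normalize t == nth ([::], [::], 0) states l))
        (transitions s.1.1 s.1.2 s.2).

Definition nstate j k := state_count j (nth ([::], [::], 0) states k).
Arguments nstate : simpl never.

Lemma states_closed :
  all (fun k => let s := nth ([::], [::], 0) states k in
       all (fun t => balanced t ==> (normalize t \in states)) (transitions s.1.1 s.1.2 s.2))
    (iota 0 9).
Proof. by vm_compute. Qed.

Lemma nstate_succ j k : k < 9 -> nstate j.+1 k = \sum_(l < 9) transfer k l * nstate j l.
Proof.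
move=> lt_k9; rewrite /nstate (state_count_succ j (L := states)) //; last first.
  by move: states_closed => /allP/(_ k); rewrite mem_iota; apply.
by rewrite (big_nth ([::], [::], 0)) big_mkord.
Qed.

Lemma nstate0 k : k < 9 -> nstate 0 k = (k == 0).
Proof.
by rewrite /nstate /state_count count_profiles_ord0; case: k => [|[|[|[|[|[|[|[|[|k]]]]]]]]].
Qed.

Definition transfer_step (x : seq nat) : seq nat :=
  [seq sumn [seq transfer k l * nth 0 x l | l <- iota 0 9] | k <- iota 0 9].

Lemma nstate_iter n k : k < 9 ->
  nstate n k = nth 0 (iter n transfer_step [:: 1; 0; 0; 0; 0; 0; 0; 0; 0]) k.
Proof.
elim: n k => [|n IHn] k lt_k9.
  by rewrite nstate0 //; case: k lt_k9 => [|[|[|[|[|[|[|[|[|]]]]]]]]].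
rewrite nstate_succ // iterS /transfer_step (nth_map 0) ?size_iota // nth_iota // add0n.
rewrite sumnE big_map -[iota 0 9]/(index_iota 0 9) big_mkord.
by apply: eq_bigr => l _; rewrite IHn.
Qed.

Lemma nstate_small n : n < 7 -> nstate n 2 = nth 0 [:: 0; 0; 1; 11; 72; 367; 1630] n.
Proof. by rewrite nstate_iter //; case: n => [|[|[|[|[|[|[|]]]]]]] //; vm_compute. Qed.

Lemma gen_eulerian_nstate n : gen_eulerian n 2 2 = nstate n 2.
Proof.
rewrite /nstate /state_count /= /gen_eulerian /fill_count -sum1_card big_mkcond /=.
apply: eq_bigr => A _; rewrite inE /rook_placement -andbA.
by congr (nat_of_bool (_ && (_ && _))); apply: eq_forallb => i; rewrite addn0.
Qed.

Local Open Scope ring_scope.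

Definition zstate k n : int := (nstate n k)%:Z.

Ltac zstate_rec :=
  move=> n; rewrite shift_act_XsubC /zstate nstate_succ // !big_ord_recr big_ord0 /= /transfer /=;
  lia.

Lemma zstate_ann0 : annihilates ('X - 1%:P) (zstate 0).
Proof. by zstate_rec. Qed.

Lemma zstate_rec1 : shift_act ('X - 1%:P) (zstate 1) =1 zstate 3.
Proof. by zstate_rec. Qed.

Lemma zstate_rec2 : shift_act ('X - 1%:P) (zstate 2) =1 (fun n => zstate 4 n + zstate 5 n).
Proof. by zstate_rec. Qed.

Lemma zstate_rec3 : shift_act ('X - 2%:P) (zstate 3) =1 zstate 0.
Proof. by zstate_rec. Qed.

Lemma zstate_rec4 : shift_act ('X - 2%:P) (zstate 4) =1
  (fun n => zstate 1 n + 2 * zstate 3 n + zstate 7 n + zstate 8 n).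
Proof. by zstate_rec. Qed.

Lemma zstate_rec5 : shift_act ('X - 2%:P) (zstate 5) =1
  (fun n => zstate 0 n + 2 * zstate 3 n + zstate 6 n).
Proof. by zstate_rec. Qed.

Lemma zstate_rec6 : shift_act ('X - 3%:P) (zstate 6) =1
  (fun n => zstate 0 n + 3 * zstate 3 n + zstate 5 n).
Proof. by zstate_rec. Qed.

Lemma zstate_rec7 : shift_act ('X - 2%:P) (zstate 7) =1
  (fun n => zstate 0 n + 4 * zstate 3 n + zstate 8 n).
Proof. by zstate_rec. Qed.

Lemma zstate_rec8 : shift_act ('X - 3%:P) (zstate 8) =1
  (fun n => zstate 0 n + 6 * zstate 3 n + zstate 7 n).
Proof. by zstate_rec. Qed.

Local Notation A := ('X - 1%:P : {poly int}).
Local Notation B := ('X - 2%:P : {poly int}).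
Local Notation C := ('X - 3%:P : {poly int}).
Local Notation Q := (C * B - 1 : {poly int}).

Lemma zstate_ann3 : annihilates (A * B) (zstate 3).
Proof. exact: annihilates_comp zstate_rec3 zstate_ann0. Qed.

Lemma zstate_ann03 (c : int) : annihilates (A * B) (fun n => zstate 0 n + c * zstate 3 n).
Proof. exact: annihilatesD (annihilates_mulr _ zstate_ann0) (annihilatesZ _ zstate_ann3). Qed.

Lemma zstate_ann1 : annihilates (A * B * A) (zstate 1).
Proof. exact: annihilates_comp zstate_rec1 zstate_ann3. Qed.

Lemma zstate_ann5 : annihilates (A * B * Q) (zstate 5).
Proof.
apply: annihilates_comp (shift_act_coupled zstate_rec5 zstate_rec6) _.
exact: annihilatesD (annihilates_shift_act _ (zstate_ann03 _)) (zstate_ann03 _).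
Qed.

Lemma zstate_ann7 : annihilates (A * B * Q) (zstate 7).
Proof.
apply: annihilates_comp (shift_act_coupled zstate_rec7 zstate_rec8) _.
exact: annihilatesD (annihilates_shift_act _ (zstate_ann03 _)) (zstate_ann03 _).
Qed.

Lemma zstate_ann8 : annihilates (A * B * Q) (zstate 8).
Proof.
rewrite [C * B]mulrC; apply: annihilates_comp (shift_act_coupled zstate_rec8 zstate_rec7) _.
exact: annihilatesD (annihilates_shift_act _ (zstate_ann03 _)) (zstate_ann03 _).
Qed.

Lemma zstate_ann4 : annihilates (A * A * B * Q * B) (zstate 4).
Proof.
apply: annihilates_comp zstate_rec4 _.
have ann_ABQ x : annihilates (A * B * Q) x -> annihilates (A * A * B * Q) x.
  by move=> ann_x; rewrite -!mulrA; apply: annihilates_mull; rewrite !mulrA.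
repeat apply: annihilatesD.
- by rewrite (_ : _ * Q = Q * (A * B * A)); [exact: annihilates_mull zstate_ann1 | ring].
- exact: annihilatesZ (ann_ABQ _ (annihilates_mulr _ zstate_ann3)).
- exact: ann_ABQ zstate_ann7.
- exact: ann_ABQ zstate_ann8.
Qed.

Lemma zstate_ann2 : annihilates (A * A * B * Q * B * A) (zstate 2).
Proof.
apply: annihilates_comp zstate_rec2 _; apply: annihilatesD; first exact: zstate_ann4.
by rewrite (_ : _ * B = (A * B) * (A * B * Q)); [exact: annihilates_mull zstate_ann5 | ring].
Qed.

Lemma gf_den_Poly : gf_den = Poly [:: 1; -12; 59; -155; 236; -209; 100; -20].
Proof. by rewrite /gf_den /= !cons_poly_def polyC0; ring. Qed.

Lemma gf_num_Poly : gf_num = Poly [:: 0; 0; 1; -1; -1; -3; 5].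
Proof. by rewrite /gf_num /= !cons_poly_def polyC0; ring. Qed.

Lemma gf_den_reciprocal : \poly_(j < 8) gf_den`_(7 - j) = A * A * B * Q * B * A.
Proof.
have -> : A * A * B * Q * B * A = Poly [:: -20; 100; -209; 236; -155; 59; -12; 1].
  by rewrite /= !cons_poly_def polyC0; ring.
apply/polyP => i; rewrite coef_poly gf_den_Poly !coef_Poly.
by case: i => [|[|[|[|[|[|[|[|i]]]]]]]]; rewrite /= ?nth_nil.
Qed.

Theorem mainTheorem8 :
  forall n : nat,
    \sum_(i < n.+1) gf_den`_i * ((gen_eulerian (n - i) 2 2)%:Z) = gf_num`_n.
Proof.
move=> n; under eq_bigr => i _ do rewrite gen_eulerian_nstate -/(zstate 2 (n - i)).
have [n_small | n_large] := ltnP n 7.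
  rewrite gf_num_Poly gf_den_Poly.
  by case: n n_small => [|[|[|[|[|[|[|]]]]]]] // _;
    rewrite !big_ord_recr big_ord0 /zstate !coef_Poly !nstate_small.
have [m ->] : exists m, n = (m + 7)%N by exists (n - 7)%N; rewrite subnK.
have size_den : (size gf_den <= 8)%N by rewrite gf_den_Poly (leq_trans (size_Poly _)).
rewrite sum_coef_reciprocal // gf_den_reciprocal zstate_ann2 gf_num_Poly coef_Poly nth_default //.
by rewrite (leq_trans _ (leq_addl _ _)).
Qed.
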